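(* Let $G$ be a connected graph. Then $KB_e(G)$ is connected if and only if there is no set of vertices $S \subsetneq V(G)$ such that (i) $N_{\overline{S}}(v)=N_{\overline{S}}(w)$ for every $v,w\in S$, and (ii) the induced subgraph $G[S]$ has at least one edge.
   Context: All graphs are finite, simple and undirected. A biclique of a graph $G$ is a maximal (with respect to inclusion) induced subgraph of $G$ that is a complete bipartite graph $K_{p,q}$ with $p,q\ge 1$. The edge-biclique graph $KB_e(G)$ is the graph with one vertex for each biclique of $G$, in which two distinct vertices are adjacent if and only if the corresponding bicliques of $G$ have at least one edge in common. For $S\subseteq V(G)$, $\overline{S}=V(G)\setminus S$, and for a vertex $v$, $N_{\overline{S}}(v)=N(v)\cap \overline{S}$ is the set of neighbours of $v$ lying in $\overline{S}$. *)

(* A finite simple graph = symmetric irreflexive rel on a finType. *)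
From mathcomp Require Import all_boot.
Set Implicit Arguments. Unset Strict Implicit. Unset Printing Implicit Defensive.

Section Graph.
Variables (T : finType) (e : rel T).

Definition connected_graph : Prop := forall x y : T, connect e x y.

Definition induced_cbip (B : {set T}) : bool :=
  [exists X : {set T}, exists Y : {set T},
     [&& X :|: Y == B, [disjoint X & Y], X != set0, Y != set0,
         [forall x in X, forall y in Y, e x y],
         [forall x in X, forall x' in X, ~~ e x x'] &
         [forall y in Y, forall y' in Y, ~~ e y y']]].

Definition is_biclique (B : {set T}) : bool :=
  induced_cbip B &&
  [forall B' : {set T}, ((B \subset B') && induced_cbip B') ==> (B' == B)].

(* Adjacency in the edge-biclique graph KB_e(G): distinct bicliques sharing an edge
   (an edge of an induced subgraph G[B] is an edge of G with both ends in B). *)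
Definition kbe_adj (B1 B2 : {set T}) : bool :=
  [&& is_biclique B1, is_biclique B2, B1 != B2 &
      [exists u, exists v, [&& e u v, u \in B1, v \in B1, u \in B2 & v \in B2]]].

Definition KBe_connected : Prop :=
  forall B1 B2 : {set T}, is_biclique B1 -> is_biclique B2 -> connect kbe_adj B1 B2.

Definition nbhd_out (S : {set T}) (v : T) : {set T} := [set u in ~: S | e v u].

End Graph.

From mathcomp Require Import all_boot.
Set Implicit Arguments. Unset Strict Implicit. Unset Printing Implicit Defensive.

(* Call S a module if all its vertices have the same neighbours outside S.
   A vertex outside a module that sees one end of an edge inside it sees both
   ends, so it cannot join a biclique through that edge; hence the bicliques
   through edges inside a proper module S form a union of components of
   KB_e(G), and since G is connected some edge leaves S and lies in a biclique
   outside them.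
   Conversely, fix a biclique B0 and call an edge reached if it lies in a
   biclique of the component of B0. For an induced path q p r with qp reached,
   qr is reached too, through a biclique containing the path. Any edge property
   carried along such steps spreads over all reached edges; applied twice, this
   shows that the vertices on reached edges form a module with an edge, hence
   are all of V, and that the class of an unreached edge under adjacency by
   unreached edges is again a proper module with an edge. So every edge, and
   thus every biclique, is reached. *)

Section EdgeBicliqueGraph.
Variables (T : finType) (e : rel T).
Hypotheses (e_sym : symmetric e) (e_irr : irreflexive e).

Definition bipartition (B X Y : {set T}) :=
  [/\ X :|: Y = B, [disjoint X & Y], X != set0 /\ Y != set0,
     (forall x y, x \in X -> y \in Y -> e x y) &
     (forall x x', x \in X -> x' \in X -> ~~ e x x') /\
     (forall y y', y \in Y -> y' \in Y -> ~~ e y y')].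

Lemma induced_cbipP B : induced_cbip e B <-> exists X Y, bipartition B X Y.
Proof.
split=> [|[X [Y [<- dis [X0 Y0] eXY [eX eY]]]]].
  case/existsP=> X /existsP[Y] /and5P[/eqP XY dis X0 Y0 /and3P[eXY eX eY]].
  exists X, Y; split=> //; last split=> x y xX yY.
  - by move=> x y xX yY; move: eXY => /forall_inP/(_ x xX)/forall_inP/(_ y yY).
  - by move: eX => /forall_inP/(_ x xX)/forall_inP/(_ y yY).
  - by move: eY => /forall_inP/(_ x xX)/forall_inP/(_ y yY).
apply/existsP; exists X; apply/existsP; exists Y; rewrite eqxx dis X0 Y0 /=.
by apply/and3P; split; apply/forall_inP=> x xX; apply/forall_inP=> y yY; auto.
Qed.

Lemma bipartition_edge B X Y a b : bipartition B X Y -> a \in B -> b \in B -> e a b ->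
  (a \in X /\ b \in Y) \/ (a \in Y /\ b \in X).
Proof.
case=> <- _ _ _ [eX eY]; rewrite !inE => /orP[] aX /orP[] bX ab.
- by move: (eX a b aX bX); rewrite ab.
- by left.
- by right.
- by move: (eY a b aX bX); rewrite ab.
Qed.

Lemma bipartition_sym B X Y : bipartition B X Y -> bipartition B Y X.
Proof.
case=> <- dis [X0 Y0] eXY [eX eY]; split=> //; first by rewrite setUC.
- by rewrite disjoint_sym.
- by move=> y x yY xX; rewrite e_sym eXY.
Qed.

Lemma cbip_edge_sides B a b : induced_cbip e B -> a \in B -> b \in B -> e a b ->
  exists X Y, [/\ bipartition B X Y, a \in X & b \in Y].
Proof.
move=> /induced_cbipP[X [Y sXY]] aB bB ab.
have [[aX bY]|[aY bX]] := bipartition_edge sXY aB bB ab; first by exists X, Y.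
by exists Y, X; split=> //; apply: bipartition_sym.
Qed.

Lemma biclique_edge B : is_biclique e B -> exists u v, [/\ u \in B, v \in B & e u v].
Proof.
case/andP=> /induced_cbipP[X [Y [<- _ [/set0Pn[u uX] /set0Pn[v vY]] eXY _]]] _.
by exists u, v; rewrite !inE uX vY orbT eXY.
Qed.

Lemma induced_cbip_edge u v : e u v -> induced_cbip e [set u; v].
Proof.
move=> uv; apply/induced_cbipP; exists [set u], [set v]; split.
- by [].
- by rewrite disjoints1 inE; apply: contraTneq uv => ->; rewrite e_irr.
- by split; apply/set0Pn; [exists u | exists v]; rewrite inE.
- by move=> x y /set1P-> /set1P->.
- by split=> x y /set1P-> /set1P->; rewrite e_irr.
Qed.

Lemma induced_cbip_P3 q p r : e q p -> e q r -> ~~ e p r -> induced_cbip e [set q; p; r].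
Proof.
move=> qp qr npr; apply/induced_cbipP; exists [set q], [set p; r]; split.
- by apply/setP=> x; rewrite !inE orbA.
- rewrite disjoints1 !inE negb_or.
  by apply/andP; split; [apply: contraTneq qp | apply: contraTneq qr] => ->; rewrite e_irr.
- by split; apply/set0Pn; [exists q | exists p]; rewrite !inE ?eqxx.
- by move=> x y /set1P-> /set2P[]->.
- split=> [x y /set1P-> /set1P->|x y /set2P[]-> /set2P[]->]; by rewrite ?e_irr // e_sym.
Qed.

Lemma biclique_sup B : induced_cbip e B -> exists2 B', is_biclique e B' & B \subset B'.
Proof.
move=> cB; have [B' /maxsetP[cB' maxB'] sBB'] := maxset_exists cB.
exists B' => //; rewrite /is_biclique cB'.
by apply/forallP=> C; apply/implyP=> /andP[sC cC]; rewrite (maxB' C cC sC).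
Qed.

Lemma edge_in_biclique u v : e u v -> exists2 B, is_biclique e B & [/\ u \in B & v \in B].
Proof.
move=> /induced_cbip_edge/biclique_sup[B bB /subsetP sB].
by exists B => //; split; apply: sB; rewrite !inE eqxx ?orbT.
Qed.

Definition is_module (S : {set T}) :=
  forall v w, v \in S -> w \in S -> nbhd_out e S v = nbhd_out e S w.

Definition proper_edge_module (S : {set T}) :=
  [/\ S \proper [set: T], is_module S & exists u v, [/\ u \in S, v \in S & e u v]].

Lemma is_moduleP S :
  is_module S <-> forall v w x, v \in S -> w \in S -> x \notin S -> e v x -> e w x.
Proof.
split=> [mS v w x vS wS xS vx|adjS v w vS wS].
  have : x \in nbhd_out e S v by rewrite !inE xS vx.
  by rewrite (mS v w vS wS) !inE => /andP[].
apply/setP=> x; rewrite !inE; case: (boolP (x \in S)) => //= xS.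
by apply/idP/idP; apply: adjS.
Qed.

Lemma module_biclique_sub S B u v : is_module S -> is_biclique e B ->
  u \in B -> v \in B -> u \in S -> v \in S -> e u v -> B \subset S.
Proof.
move=> /is_moduleP adjS /andP[cB _] uB vB uS vS uv.
have [X [Y [[<- _ _ eXY [eX eY]] uX vY]]] := cbip_edge_sides cB uB vB uv.
apply/subsetP=> w; rewrite inE; apply: contraLR => wS; apply/norP; split.
  by apply/negP=> wX; move: (eX u w uX wX); rewrite (adjS v) // e_sym eXY.
by apply/negP=> wY; move: (eY v w vY wY); rewrite (adjS u) // eXY.
Qed.

Lemma kbe_adjP B1 B2 : reflect
  [/\ is_biclique e B1, is_biclique e B2, B1 != B2 &
      exists u v, [/\ e u v, u \in B1, v \in B1, u \in B2 & v \in B2]]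
  (kbe_adj e B1 B2).
Proof.
apply: (iffP and4P) => [[b1 b2 ne /existsP[u /existsP[v /and5P[uv u1 v1 u2 v2]]]]|].
  by split=> //; exists u, v.
case=> b1 b2 ne [u [v [uv u1 v1 u2 v2]]]; split=> //.
by apply/existsP; exists u; apply/existsP; exists v; rewrite uv u1 v1 u2 v2.
Qed.

Lemma kbe_adj_sym : symmetric (kbe_adj e).
Proof.
suff kbe_adjC B1 B2 : kbe_adj e B1 B2 -> kbe_adj e B2 B1.
  by move=> B1 B2; apply/idP/idP; apply: kbe_adjC.
case/kbe_adjP=> b1 b2 ne [u [v [uv u1 v1 u2 v2]]].
by apply/kbe_adjP; split; rewrite 1?eq_sym //; exists u, v.
Qed.

Lemma module_connect_sub S B1 B2 : is_module S -> connect (kbe_adj e) B1 B2 ->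
  B1 \subset S -> B2 \subset S.
Proof.
move=> mS /connectP[p pth ->]; elim: p B1 pth => //= B p IH B1 /andP[adj pth] sB1.
apply: IH pth _; case/kbe_adjP: adj => _ bB _ [u [v [uv u1 v1 uB vB]]].
by apply: (module_biclique_sub mS bB uB vB _ _ uv); apply: (subsetP sB1).
Qed.

Lemma connect_cross (S : {set T}) u x : connect e u x -> u \in S -> x \notin S ->
  exists s y, [/\ s \in S, y \notin S & e s y].
Proof.
move=> /connectP[p pth ->]; elim: p u pth => /= [|y p IH] u; first by move=> _ ->.
case/andP=> uy pth uS lS; case: (boolP (y \in S)) => yS; first exact: IH pth yS lS.
by exists u, y.
Qed.

Lemma module_KBe_disconnected S :
  connected_graph e -> proper_edge_module S -> ~ KBe_connected e.
Proof.
move=> Gc [/properP[_ [x _ xS]] mS [u [v [uS vS uv]]]] Kc.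
have [s [y [sS yS sy]]] := connect_cross (Gc u x) uS xS.
have [B1 b1 [uB1 vB1]] := edge_in_biclique uv.
have [B2 b2 [sB2 yB2]] := edge_in_biclique sy.
have sB1S := module_biclique_sub mS b1 uB1 vB1 uS vS uv.
by move: yS; rewrite (subsetP (module_connect_sub mS (Kc B1 B2 b1 b2) sB1S)).
Qed.

Section Reachability.
Variable B0 : {set T}.
Hypothesis b0 : is_biclique e B0.

Definition reached B := connect (kbe_adj e) B0 B.

Definition reached_edge a b :=
  e a b && [exists B, [&& is_biclique e B, a \in B, b \in B & reached B]].

Lemma reached_edgeP a b : reflect
  (exists B, [/\ is_biclique e B, reached B, a \in B, b \in B & e a b])
  (reached_edge a b).
Proof.
apply: (iffP andP) => [[ab /existsP[B /and4P[bB aB bB' rB]]]|[B [bB rB aB bB' ab]]].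
  by exists B.
by split=> //; apply/existsP; exists B; rewrite bB aB bB' rB.
Qed.

Lemma reached_edge_sym a b : reached_edge a b -> reached_edge b a.
Proof.
by case/reached_edgeP=> B [bB rB aB bB' ab]; apply/reached_edgeP; exists B; rewrite e_sym.
Qed.

Lemma connect_reached B1 B2 : reached B1 -> reached B2 -> connect (kbe_adj e) B1 B2.
Proof.
move=> r1; apply: connect_trans; rewrite (sym_connect_sym kbe_adj_sym); exact: r1.
Qed.

Lemma reached_edge_biclique B u v :
  reached_edge u v -> is_biclique e B -> u \in B -> v \in B -> reached B.
Proof.
case/reached_edgeP=> B1 [b1 r1 u1 v1 uv] bB uB vB.
have [<- //|ne] := eqVneq B1 B; apply: (connect_trans r1); apply: connect1.
by apply/kbe_adjP; split=> //; exists u, v.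
Qed.

Lemma reached_edge_P3 q p r : reached_edge q p -> e q r -> ~~ e p r -> reached_edge q r.
Proof.
move=> rqp qr npr; have qp : e q p by case/andP: rqp.
have [B bB /subsetP sB] := biclique_sup (induced_cbip_P3 qp qr npr).
have [qB pB rB] : [/\ q \in B, p \in B & r \in B] by split; apply: sB; rewrite !inE eqxx ?orbT.
apply/reached_edgeP; exists B; split=> //; exact: reached_edge_biclique rqp bB qB pB.
Qed.

Section Propagation.
Variable F : rel T.
Hypothesis F_sym : forall a b, F a b -> F b a.
Hypothesis F_step : forall p q r, F p q -> reached_edge q r -> ~~ e p r -> F q r.

Let all_edges (B : {set T}) := forall a b, a \in B -> b \in B -> e a b -> F a b.

Lemma propagate_biclique B a b : is_biclique e B -> reached B ->
  a \in B -> b \in B -> e a b -> F a b -> all_edges B.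
Proof.
move=> bB rB aB bB' ab Fab.
have [X [Y [sXY aX bY]]] := cbip_edge_sides (andP bB).1 aB bB' ab.
have [BXY _ _ eXY [eX eY]] := sXY.
have rXY x y : x \in X -> y \in Y -> reached_edge x y.
  move=> xX yY; apply/reached_edgeP; exists B.
  by rewrite -[in x \in B]BXY -[in y \in B]BXY !inE xX yY orbT eXY.
have FXY x y : x \in X -> y \in Y -> F x y.
  move=> xX yY; have Fay := F_step (F_sym Fab) (rXY a y aX yY) (eY b y bY yY).
  exact/F_sym/(F_step Fay (reached_edge_sym (rXY x y xX yY)) (eX a x aX xX)).
move=> a' b' a'B b'B a'b'.
by have [[a'X b'Y]|[a'Y b'X]] := bipartition_edge sXY a'B b'B a'b'; [|apply: F_sym]; apply: FXY.
Qed.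

Lemma propagate_connect B B' : reached B -> connect (kbe_adj e) B B' ->
  all_edges B -> all_edges B'.
Proof.
move=> rB /connectP[p pth ->]; elim: p B rB pth => //= B1 p IH B rB /andP[adj pth] FB.
case/kbe_adjP: (adj) => _ b1 _ [u [v [uv uB vB u1 v1]]].
have r1 : reached B1 := connect_trans rB (connect1 adj).
exact: IH r1 pth (propagate_biclique b1 r1 u1 v1 uv (FB u v uB vB uv)).
Qed.

Lemma propagate a b c d : reached_edge a b -> F a b -> reached_edge c d -> F c d.
Proof.
case/reached_edgeP=> B [bB rB aB bB' ab] Fab /reached_edgeP[B' [_ rB' cB' dB' cd]].
have FB := propagate_biclique bB rB aB bB' ab Fab.
by have := propagate_connect rB (connect_reached rB rB') FB; apply.
Qed.

End Propagation.

Definition covered := [set z | [exists y, reached_edge z y]].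

Lemma coveredP z : reflect (exists y, reached_edge z y) (z \in covered).
Proof. by rewrite inE; apply: existsP. Qed.

Lemma reached_edge_adj x a b :
  x \notin covered -> reached_edge a b -> e a x -> e b x.
Proof.
move=> xC rab ax; apply: contraNT xC => nbx; apply/coveredP; exists a.
exact/reached_edge_sym/(reached_edge_P3 rab ax nbx).
Qed.

Lemma covered_module : is_module covered.
Proof.
apply/is_moduleP=> v w x /coveredP[y rvy] /coveredP[y' rwy'] xC vx.
suff /andP[] : e w x && e y' x by [].
apply: (propagate (F := [rel a b | e a x && e b x])) (rvy) _ rwy'.
- by move=> a b /andP[ax bx]; rewrite /= ax bx.
- by move=> p q r /andP[_ qx] rqr _; rewrite /= qx (reached_edge_adj xC rqr qx).
- by rewrite /= vx (reached_edge_adj xC rvy vx).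
Qed.

Lemma covered_edge : exists u v, [/\ u \in covered, v \in covered & e u v].
Proof.
have [u [v [uB vB uv]]] := biclique_edge b0.
have ruv : reached_edge u v by apply/reached_edgeP; exists B0; split=> //; apply: connect0.
exists u, v; split=> //; apply/coveredP; [exists v | exists u] => //.
exact: reached_edge_sym.
Qed.

Lemma covered_full : ~ (exists S, proper_edge_module S) -> covered = setT.
Proof.
move=> noS; apply/eqP; apply: contraT; rewrite -properT => prC.
by case: noS; exists covered; split; [|exact: covered_module|exact: covered_edge].
Qed.

Lemma unreached_edge_transfer v w y : covered = setT ->
  e v w -> ~~ reached_edge v w -> reached_edge v y -> reached_edge w y.
Proof.
(* Otherwise every reached edge would have both ends adjacent to [w] by
   unreached edges, including the reached edges at [w] itself. *)
move=> CT vw nrvw rvy; apply: contraT => nrwy.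
have yw : e y w by apply: contraNT nrvw => nyw; apply: reached_edge_P3 rvy vw nyw.
have /coveredP[t rwt] : w \in covered by rewrite CT inE.
pose F := [rel a b | [&& e a w, e b w, ~~ reached_edge w a & ~~ reached_edge w b]].
suff : F w t by rewrite /F /= e_irr.
apply: (propagate (F := F)) (rvy) _ rwt.
- by move=> a b /and4P[aw bw nra nrb]; rewrite /F /= aw bw nra nrb.
- move=> p q r /and4P[pw qw nrwp nrwq] rqr npr; rewrite /F /= qw nrwq /=.
  have -> /= : e r w.
    by apply: contraNT nrwq => nrw; apply/reached_edge_sym/(reached_edge_P3 rqr qw nrw).
  by apply: contraNN nrwp => rwr; apply: reached_edge_P3 rwr _ _; rewrite e_sym.
- rewrite /F /= vw yw nrwy andbT /=.
  by apply: contraNN nrvw; apply: reached_edge_sym.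
Qed.

Lemma unreached_edge_eq v w : covered = setT -> e v w -> ~~ reached_edge v w ->
  reached_edge v =1 reached_edge w.
Proof.
move=> CT vw nrvw y; apply/idP/idP; first exact: unreached_edge_transfer.
apply: unreached_edge_transfer; rewrite 1?e_sym //.
by apply: contraNN nrvw; apply: reached_edge_sym.
Qed.

Definition unreached_adj := [rel a b | e a b && ~~ reached_edge a b].

Lemma unreached_connect_eq a z : covered = setT ->
  connect unreached_adj a z -> reached_edge z =1 reached_edge a.
Proof.
move=> CT /connectP[p pth ->] y; elim: p a pth => //= b p IH a /andP[/andP[ab nrab] pth].
by rewrite IH // (unreached_edge_eq CT ab nrab).
Qed.

Lemma reached_edge_all : ~ (exists S, proper_edge_module S) ->
  forall u w, e u w -> reached_edge u w.
Proof.
move=> noS u w uw; have CT := covered_full noS; apply: contraT => nruw; case: noS.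
pose M := [set z | connect unreached_adj u z].
have reachedM z : z \in M -> reached_edge z =1 reached_edge u.
  by rewrite inE; apply: unreached_connect_eq.
have uM : u \in M by rewrite inE connect0.
have wM : w \in M by rewrite inE connect1 //= uw.
exists M; split; last by exists u, w.
- have /coveredP[y ruy] : u \in covered by rewrite CT inE.
  rewrite properT; apply/negP => /eqP MT.
  have := reachedM y; rewrite MT inE => /(_ isT y).
  by rewrite ruy /reached_edge e_irr.
- apply/is_moduleP=> v w' x vM w'M xM vx.
  have rvx : reached_edge v x.
    apply: contraNT xM => nrvx; move: vM; rewrite !inE => uv.
    by apply: connect_trans uv (connect1 _); rewrite /= vx.
  by move: rvx; rewrite (reachedM v vM) -(reachedM w' w'M) => /andP[].
Qed.

Lemma reached_all B : ~ (exists S, proper_edge_module S) -> is_biclique e B -> reached B.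
Proof.
move=> noS bB; have [u [v [uB vB uv]]] := biclique_edge bB.
exact: reached_edge_biclique (reached_edge_all noS uv) bB uB vB.
Qed.

End Reachability.

End EdgeBicliqueGraph.

Theorem theorem1 (T : finType) (e : rel T)
  (e_sym : symmetric e) (e_irr : irreflexive e)
  (Gconn : connected_graph e) :
  KBe_connected e <->
  ~ (exists S : {set T},
       [/\ S \proper [set: T],
           (forall v w, v \in S -> w \in S -> nbhd_out e S v = nbhd_out e S w) &
           (exists u v, [/\ u \in S, v \in S & e u v])]).
Proof.
split=> [Kc [S eS]|noS B1 B2 b1 b2].
  exact: module_KBe_disconnected Gconn eS Kc.
apply: (reached_all e_sym e_irr b1 noS b2).
Qed.
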